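(* Let $\mathcal H$ be a finite-dimensional complex Hilbert space, $A$ Hermitian, $\rho$ a density operator and $|\phi\rangle$ a unit vector with $\langle\phi|\rho|\phi\rangle>0$, and define $C(\rho,A,\phi):=\big(\langle\Delta A_w\rangle^{\phi}_{\rho}\big)^2-\big(\langle\Delta A\rangle^{\phi}_{\rho}\big)^2$. Then: (i) $C(\rho,A,\phi)\ge0$; (ii) $C(\rho,A,\phi)=0$ when $\rho$ is pure; (iii) if $\mathcal H=\mathcal H_1\otimes\mathcal H_2$, $\rho=\rho_1\otimes\rho_2$, $|\phi\rangle=|\phi_1\rangle\otimes|\phi_2\rangle$ with $\langle\phi_j|\rho_j|\phi_j\rangle>0$, and $A_1,A_2$ are Hermitian on $\mathcal H_1,\mathcal H_2$ respectively, then $$C(\rho,A_1\otimes I+I\otimes A_2,\phi)=C(\rho,A_1\otimes I,\phi)+C(\rho,I\otimes A_2,\phi).$$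
   Context: For a density operator $\rho$, Hermitian $X$ and unit vector $|\phi\rangle$ with $\langle\phi|\rho|\phi\rangle>0$: $\big(\langle\Delta X\rangle^{\phi}_{\rho}\big)^2:=\operatorname{Tr}(X^2\rho)-\langle\phi|X\rho X|\phi\rangle$ and $\big(\langle\Delta X_w\rangle^{\phi}_{\rho}\big)^2:=\operatorname{Tr}(X^2\rho)-\frac{|\langle\phi|X\rho|\phi\rangle|^2}{\langle\phi|\rho|\phi\rangle}$. *)

From HB Require Import structures.
From mathcomp Require Import all_boot all_order all_algebra.
From mathcomp Require Import complex mxtens.
From mathcomp Require Import Rstruct.
From Stdlib Require Import Reals.
Set Implicit Arguments. Unset Strict Implicit. Unset Printing Implicit Defensive.
Import Order.TTheory GRing.Theory Num.Theory.
Local Open Scope ring_scope.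

Notation Cplx := (Rdefinitions.R)[i].

Definition adj {m n : nat} (A : 'M[Cplx]_(m, n)) : 'M[Cplx]_(n, m) :=
  (map_mx Num.conj A)^T.

Definition herm_op {n : nat} (A : 'M[Cplx]_n) : Prop := adj A = A.

Definition braket {n : nat} (u v : 'cV[Cplx]_n) : Cplx := (adj u *m v) 0 0.

Definition mel {n : nat} (u : 'cV[Cplx]_n) (X : 'M[Cplx]_n) (v : 'cV[Cplx]_n) : Cplx :=
  (adj u *m X *m v) 0 0.

Definition psd {n : nat} (A : 'M[Cplx]_n) : Prop :=
  herm_op A /\ forall x : 'cV[Cplx]_n, 0 <= mel x A x.

Definition density {n : nat} (rho : 'M[Cplx]_n) : Prop := psd rho /\ \tr rho = 1.

Definition unitvec {n : nat} (phi : 'cV[Cplx]_n) : Prop := braket phi phi = 1.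

Definition pure {n : nat} (rho : 'M[Cplx]_n) : Prop :=
  exists psi : 'cV[Cplx]_n, unitvec psi /\ rho = psi *m adj psi.

(* (<Delta X>^phi_rho)^2 := Tr(X^2 rho) - <phi|X rho X|phi>. *)
Definition dev2 {n : nat} (rho X : 'M[Cplx]_n) (phi : 'cV[Cplx]_n) : Cplx :=
  \tr (X *m X *m rho) - mel phi (X *m rho *m X) phi.

(* (<Delta X_w>^phi_rho)^2 := Tr(X^2 rho) - |<phi|X rho|phi>|^2 / <phi|rho|phi>. *)
Definition dev2w {n : nat} (rho X : 'M[Cplx]_n) (phi : 'cV[Cplx]_n) : Cplx :=
  \tr (X *m X *m rho) - (`|mel phi (X *m rho) phi| ^+ 2) / mel phi rho phi.

Definition Cgap {n : nat} (rho A : 'M[Cplx]_n) (phi : 'cV[Cplx]_n) : Cplx :=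
  dev2w rho A phi - dev2 rho A phi.

(* Kronecker/tensor product (index (i,j) |-> i * n2 + j). *)
Definition tens {m n p q : nat} (A : 'M[Cplx]_(m, n)) (B : 'M[Cplx]_(p, q))
  : 'M[Cplx]_(m * p, n * q) := tensmx A B.

(** With [v := A phi] and the semi-inner product [<x, y>_rho := <x|rho|y>], the
    gap is [C = <v, v>_rho - |<v, phi>_rho|^2 / <phi, phi>_rho], the defect in the
    Cauchy-Schwarz inequality for [<., .>_rho]; hence [C >= 0], with equality when
    [rho] has rank one.  For [A = A1 (x) I + I (x) A2] on a product state,
    [<v, v>_rho] contains the cross terms [2 Re (b1 conj(b2))] with
    [b_j = <A_j phi_j|rho_j|phi_j>] and [c_j = <phi_j|rho_j|phi_j>], and the square [|b1 c2 + c1 b2|^2] in the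
    second term produces the same cross terms, so they cancel. *)

From HB Require Import structures.
From mathcomp Require Import all_boot all_order all_algebra.
From mathcomp Require Import complex mxtens Rstruct.
From Stdlib Require Import Reals.
From mathcomp Require Import ring.
Set Implicit Arguments. Unset Strict Implicit. Unset Printing Implicit Defensive.
Import Order.TTheory GRing.Theory Num.Theory.
Local Open Scope ring_scope.

Lemma adjK m n (A : 'M[Cplx]_(m, n)) : adj (adj A) = A.
Proof. by apply/matrixP=> i j; rewrite !mxE conjCK. Qed.

Lemma adj_mul m n p (A : 'M[Cplx]_(m, n)) (B : 'M[Cplx]_(n, p)) :
  adj (A *m B) = adj B *m adj A.
Proof. by rewrite /adj map_mxM trmx_mul. Qed.

Lemma adjD m n (A B : 'M[Cplx]_(m, n)) : adj (A + B) = adj A + adj B.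
Proof. by apply/matrixP=> i j; rewrite !mxE rmorphD. Qed.

Lemma adjB m n (A B : 'M[Cplx]_(m, n)) : adj (A - B) = adj A - adj B.
Proof. by apply/matrixP=> i j; rewrite !mxE rmorphB. Qed.

Lemma adjZ m n a (A : 'M[Cplx]_(m, n)) : adj (a *: A) = a^* *: adj A.
Proof. by apply/matrixP=> i j; rewrite !mxE rmorphM. Qed.

Lemma adj_mx11 (X : 'M[Cplx]_1) : adj X 0 0 = (X 0 0)^*.
Proof. by rewrite !mxE. Qed.

Lemma adj_tens m n p q (A : 'M[Cplx]_(m, n)) (B : 'M[Cplx]_(p, q)) :
  adj (tens A B) = tens (adj A) (adj B).
Proof. by rewrite /adj /tens map_mxT trmx_tens. Qed.

Lemma tens_mx11 (X Y : 'M[Cplx]_1) : (tens X Y : 'M_(1 * 1)) 0 0 = X 0 0 * Y 0 0.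
Proof.
by rewrite /tens !mxE !(ord1 (mxtens_unindex _).1) !(ord1 (mxtens_unindex _).2).
Qed.

Lemma herm_op1 n : herm_op (1%:M : 'M[Cplx]_n).
Proof. by apply/matrixP=> i j; rewrite !mxE rmorphMn rmorph1 eq_sym. Qed.

Lemma herm_opD n (A B : 'M[Cplx]_n) : herm_op A -> herm_op B -> herm_op (A + B).
Proof. by rewrite /herm_op adjD => -> ->. Qed.

Lemma herm_op_tens n1 n2 (A1 : 'M[Cplx]_n1) (A2 : 'M[Cplx]_n2) :
  herm_op A1 -> herm_op A2 -> herm_op (tens A1 A2).
Proof. by rewrite /herm_op adj_tens => -> ->. Qed.

Lemma mel_adj n (u v : 'cV[Cplx]_n) M : (mel u M v)^* = mel v (adj M) u.
Proof. by rewrite /mel -adj_mx11 !adj_mul adjK mulmxA. Qed.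

Lemma mel_herm n (u v : 'cV[Cplx]_n) M : herm_op M -> mel v M u = (mel u M v)^*.
Proof. by rewrite mel_adj => ->. Qed.

Lemma mel_mulml n (u v : 'cV[Cplx]_n) M A : mel u (A *m M) v = mel (adj A *m u) M v.
Proof. by rewrite /mel adj_mul adjK !mulmxA. Qed.

Lemma mel_mulmr n (u v : 'cV[Cplx]_n) M A : mel u (M *m A) v = mel u M (A *m v).
Proof. by rewrite /mel !mulmxA. Qed.

Lemma mel_addl n (u1 u2 v : 'cV[Cplx]_n) M :
  mel (u1 + u2) M v = mel u1 M v + mel u2 M v.
Proof. by rewrite /mel adjD !mulmxDl mxE. Qed.

Lemma mel_addr n (u v1 v2 : 'cV[Cplx]_n) M :
  mel u M (v1 + v2) = mel u M v1 + mel u M v2.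
Proof. by rewrite /mel !mulmxDr mxE. Qed.

Lemma mel_subl n (u1 u2 v : 'cV[Cplx]_n) M :
  mel (u1 - u2) M v = mel u1 M v - mel u2 M v.
Proof. by rewrite /mel adjB !mulmxBl !mxE. Qed.

Lemma mel_subr n (u v1 v2 : 'cV[Cplx]_n) M :
  mel u M (v1 - v2) = mel u M v1 - mel u M v2.
Proof. by rewrite /mel !mulmxBr !mxE. Qed.

Lemma mel_scalel n a (u v : 'cV[Cplx]_n) M : mel (a *: u) M v = a^* * mel u M v.
Proof. by rewrite /mel adjZ -!scalemxAl mxE. Qed.

Lemma mel_scaler n a (u v : 'cV[Cplx]_n) M : mel u M (a *: v) = a * mel u M v.
Proof. by rewrite /mel -!scalemxAr mxE. Qed.

Lemma mel_tens n1 n2 (u1 v1 : 'cV[Cplx]_n1) (u2 v2 : 'cV[Cplx]_n2) M1 M2 :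
  mel (tens u1 u2) (tens M1 M2) (tens v1 v2) = mel u1 M1 v1 * mel u2 M2 v2.
Proof.
by rewrite /mel (adj_tens u1 u2) -tens_mx11 /tens -!tensmx_mul.
Qed.

Lemma mel_rank1 n (psi u v : 'cV[Cplx]_n) :
  mel u (psi *m adj psi) v = (braket psi u)^* * braket psi v.
Proof.
by rewrite /mel /braket mulmxA -mulmxA mxE big_ord1 -adj_mx11 adj_mul adjK.
Qed.

Lemma tens_mulmx_idr n1 n2 (A1 : 'M[Cplx]_n1) (u1 : 'cV[Cplx]_n1) (u2 : 'cV[Cplx]_n2) :
  tens A1 1%:M *m tens u1 u2 = tens (A1 *m u1) u2.
Proof. by rewrite /tens (tensmx_mul A1 (1%:M : 'M_n2)) mul1mx. Qed.

Lemma tens_mulmx_idl n1 n2 (A2 : 'M[Cplx]_n2) (u1 : 'cV[Cplx]_n1) (u2 : 'cV[Cplx]_n2) :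
  tens 1%:M A2 *m tens u1 u2 = tens u1 (A2 *m u2).
Proof. by rewrite /tens (tensmx_mul (1%:M : 'M_n1) A2) mul1mx. Qed.

Lemma Cgap_herm n (rho A : 'M[Cplx]_n) phi : herm_op A ->
  Cgap rho A phi = mel (A *m phi) rho (A *m phi)
     - `|mel (A *m phi) rho phi| ^+ 2 / mel phi rho phi.
Proof.
move=> hA; rewrite /Cgap /dev2w /dev2 (mel_mulmr _ _ (A *m rho)) !mel_mulml hA.
by rewrite opprB addrC addrA subrK.
Qed.

Lemma mel_cauchy_schwarz n (rho : 'M[Cplx]_n) (u phi : 'cV[Cplx]_n) :
  psd rho -> 0 < mel phi rho phi ->
  `|mel u rho phi| ^+ 2 / mel phi rho phi <= mel u rho u.
Proof.
move=> [hrho rho_ge0] c_gt0.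
set c := mel phi rho phi; set a := mel u rho u; set b := mel phi rho u.
have b_adj : mel u rho phi = b^* by rewrite /b mel_herm.
have c_real : c^* = c by apply/geC0_conj/ltW.
have c_neq0 : c != 0 by rewrite gt_eqF.
(* Evaluate the form on [c u - b phi], the component of [c u] orthogonal to [phi]. *)
have proj : mel (c *: u - b *: phi) rho (c *: u - b *: phi) = c * (c * a - b^* * b).
  by rewrite !mel_subl !mel_subr !mel_scalel !mel_scaler b_adj c_real -/a -/b -/c; ring.
rewrite b_adj.
have -> : a = `|b^*| ^+ 2 / c
              + mel (c *: u - b *: phi) rho (c *: u - b *: phi) / (c * c).
  by rewrite proj normCK conjCK; field.
by rewrite lerDl divr_ge0 // mulr_ge0 // ltW.
Qed.

Lemma Cgap_ge0 n (rho A : 'M[Cplx]_n) (phi : 'cV[Cplx]_n) :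
  psd rho -> herm_op A -> 0 < mel phi rho phi -> 0 <= Cgap rho A phi.
Proof. by move=> hrho hA c_gt0; rewrite Cgap_herm // subr_ge0 mel_cauchy_schwarz. Qed.

Lemma Cgap_rank1 n (psi : 'cV[Cplx]_n) (A : 'M[Cplx]_n) (phi : 'cV[Cplx]_n) :
  herm_op A -> 0 < mel phi (psi *m adj psi) phi -> Cgap (psi *m adj psi) A phi = 0.
Proof.
move=> hA; rewrite Cgap_herm // !mel_rank1.
set p := braket psi phi.
rewrite lt0r => /andP[]; rewrite mulf_eq0 negb_or => /andP[p'_neq0 p_neq0] _.
by rewrite normCK !rmorphM /= conjCK; field; rewrite p'_neq0 p_neq0.
Qed.

Lemma cross_terms_cancel (C : numClosedFieldType) (a1 a2 b1 b2 c1 c2 : C) :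
  c1^* = c1 -> c2^* = c2 -> c1 != 0 -> c2 != 0 ->
  a1 * c2 + b1 * b2^* + (b1^* * b2 + c1 * a2) - `|b1 * c2 + c1 * b2| ^+ 2 / (c1 * c2)
  = a1 * c2 - `|b1 * c2| ^+ 2 / (c1 * c2) + (c1 * a2 - `|c1 * b2| ^+ 2 / (c1 * c2)).
Proof.
move=> c1_real c2_real c1_neq0 c2_neq0.
rewrite !normCK !rmorphD !rmorphM /= c1_real c2_real.
by field; rewrite c1_neq0 c2_neq0.
Qed.

Lemma Cgap_tens_add n1 n2 (rho1 A1 : 'M[Cplx]_n1) (rho2 A2 : 'M[Cplx]_n2)
    (phi1 : 'cV[Cplx]_n1) (phi2 : 'cV[Cplx]_n2) :
  herm_op rho1 -> herm_op rho2 ->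
  0 < mel phi1 rho1 phi1 -> 0 < mel phi2 rho2 phi2 ->
  herm_op A1 -> herm_op A2 ->
  Cgap (tens rho1 rho2) (tens A1 1%:M + tens 1%:M A2) (tens phi1 phi2)
  = Cgap (tens rho1 rho2) (tens A1 1%:M) (tens phi1 phi2)
    + Cgap (tens rho1 rho2) (tens 1%:M A2) (tens phi1 phi2).
Proof.
move=> hrho1 hrho2 c1_gt0 c2_gt0 hA1 hA2.
have hB1 := herm_op_tens hA1 (herm_op1 n2).
have hB2 := herm_op_tens (herm_op1 n1) hA2.
have hB := herm_opD hB1 hB2.
rewrite !Cgap_herm // mulmxDl tens_mulmx_idr tens_mulmx_idl.
rewrite !mel_addl !mel_addr !mel_tens (mel_herm (A1 *m phi1) phi1 hrho1)
  (mel_herm (A2 *m phi2) phi2 hrho2).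
by apply: cross_terms_cancel; rewrite ?gt_eqF //; apply/geC0_conj/ltW.
Qed.

Theorem mainTheorem9 :
  (forall (n : nat) (rho A : 'M[Cplx]_n) (phi : 'cV[Cplx]_n),
      density rho -> herm_op A -> unitvec phi -> 0 < mel phi rho phi ->
      0 <= Cgap rho A phi) /\
  (forall (n : nat) (rho A : 'M[Cplx]_n) (phi : 'cV[Cplx]_n),
      density rho -> pure rho -> herm_op A -> unitvec phi ->
      0 < mel phi rho phi ->
      Cgap rho A phi = 0) /\
  (forall (n1 n2 : nat) (rho1 A1 : 'M[Cplx]_n1) (rho2 A2 : 'M[Cplx]_n2)
          (phi1 : 'cV[Cplx]_n1) (phi2 : 'cV[Cplx]_n2),
      density rho1 -> density rho2 -> unitvec phi1 -> unitvec phi2 ->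
      0 < mel phi1 rho1 phi1 -> 0 < mel phi2 rho2 phi2 ->
      herm_op A1 -> herm_op A2 ->
      Cgap (tens rho1 rho2) (tens A1 1%:M + tens 1%:M A2) (tens phi1 phi2)
      = Cgap (tens rho1 rho2) (tens A1 1%:M) (tens phi1 phi2)
        + Cgap (tens rho1 rho2) (tens 1%:M A2) (tens phi1 phi2)).
Proof.
split; [|split].
- by move=> n rho A phi [hrho _] hA _; apply: Cgap_ge0.
- by move=> n rho A phi _ [psi [_ ->]] hA _; apply: Cgap_rank1.
- move=> n1 n2 rho1 A1 rho2 A2 phi1 phi2 [[hrho1 _] _] [[hrho2 _] _] _ _.
  exact: Cgap_tens_add.
Qed.
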